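(* Let $d\ge3$ and consider the mutating contact process $(\xi_t)_{t\ge0}$ on the $d$-regular tree $\mathbb{T}_d$ with death rate $\delta>0$ and mutation rate $\mu>0$, started from any finite initial configuration with $\{x:\xi_0(x)=1\}\neq\varnothing$. If $\delta+\mu$ is sufficiently small, then \[ P\left({}^{1}\xi_t\neq\varnothing \text{ for all } t>0\right)>0 . \]
   Context: $\mathbb{T}_d$ is the infinite tree in which every vertex has exactly $d$ neighbours; $x\sim y$ denotes adjacency. The mutating contact process with parameters $\delta>0$ (death rate) and $\mu>0$ (mutation rate) is the Feller process $\xi_t\in\{0,1,2\}^{\mathbb{T}_d}$ ($0$ = vacant, $1$ = the distinguished strain, $2$ = any other strain) which, writing $n(x,\xi,i)=\#\{y\sim x:\xi(y)=i\}$, makes the following transitions at each site $x$: $i\to0$ at rate $\delta$ ($i=1,2$); $0\to i$ at rate $n(x,\xi,i)$ ($i=1,2$); $1\to2$ at rate $\mu$. A configuration is finite if only finitely many sites are nonzero. ${}^{1}\xi_t=\{x:\xi_t(x)=1\}$. *)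

From Stdlib Require Import Reals List Arith Lia.
Import ListNotations.
Open Scope R_scope.

(** * The d-regular tree T_d
    A vertex is a list of nat, read as the path from the root (the root is [])
    with the most recent step at the head.  The root has children [a] for a < d;
    a non-root vertex v has children a :: v for a < d-1 and parent (tail v). *)
Definition vertex := list nat.
Definition vertex_eq_dec : forall x y : vertex, {x = y} + {x <> y} :=
  list_eq_dec Nat.eq_dec.

Fixpoint is_vertex (d : nat) (v : vertex) : Prop :=
  match v with
  | [] => True
  | a :: p => is_vertex d p /\ (a < match p with [] => d | _ => d - 1 end)%nat
  end.

Definition neighbours (d : nat) (v : vertex) : list vertex :=
  match v with
  | [] => map (fun a => [a]) (seq 0 d)
  | _ :: p => p :: map (fun a => a :: v) (seq 0 (d - 1))
  end.

Definition adj (d : nat) (x y : vertex) : Prop :=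
  is_vertex d x /\ In y (neighbours d x).

Inductive strain := vac | one | two .

Definition config := vertex -> strain.

Definition is_vac (s : strain) : bool := match s with vac => true | _ => false end.
Definition is_one (s : strain) : bool := match s with one => true | _ => false end.

Definition upd (xi : config) (y : vertex) (s : strain) : config :=
  fun v => if vertex_eq_dec v y then s else xi v.

Definition covers (d : nat) (xi : config) (L : list vertex) : Prop :=
  forall v, xi v <> vac -> is_vertex d v /\ In v L.

(** * Transitions of the mutating contact process
    From a finite configuration xi (with covering list L) the possible jumps are,
    with their rates:
    - each occupied x becomes 0 at rate delta;
    - each x of type 1 becomes 2 at rate mu;
    - for each occupied x and each vacant neighbour y, y takes the type of x
      at rate 1 (so a vacant y becomes i at total rate n(y,xi,i)).
    A jump is a triple (rate, new configuration, new covering list). *)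
Definition births (d : nat) (xi : config) (L : list vertex) (x : vertex) (s : strain)
  : list (R * (config * list vertex)) :=
  map (fun y => (1, (upd xi y s, y :: L)))
      (filter (fun y => is_vac (xi y)) (neighbours d x)).

Definition moves (d : nat) (delta mu : R) (xi : config) (L : list vertex)
  : list (R * (config * list vertex)) :=
  flat_map (fun x =>
     match xi x with
     | vac => []
     | one => (delta, (upd xi x vac, L)) :: (mu, (upd xi x two, L))
                :: births d xi L x one
     | two => (delta, (upd xi x vac, L)) :: births d xi L x two
     end) (nodup vertex_eq_dec L).

Definition total_rate (d : nat) (delta mu : R) (xi : config) (L : list vertex) : R :=
  fold_right (fun m acc => fst m + acc) 0 (moves d delta mu xi L).

Definition has_one (xi : config) (L : list vertex) : bool :=
  existsb (fun x => is_one (xi x)) L.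

(** surv_n d delta mu n xi L = probability that, for the process started at xi,
    the set {x : xi_t(x) = 1} is non-empty at the initial time and after each of
    the first n jumps (computed through the embedded jump chain, which moves
    from xi to xi' with probability rate/total_rate). *)
Fixpoint surv_n (d : nat) (delta mu : R) (n : nat) (xi : config) (L : list vertex) : R :=
  if has_one xi L then
    match n with
    | O => 1
    | S n' =>
        fold_right
          (fun m acc => fst m / total_rate d delta mu xi L
                          * surv_n d delta mu n' (fst (snd m)) (snd (snd m)) + acc)
          0 (moves d delta mu xi L)
    end
  else 0.

From Stdlib Require Import Reals List.
From Stdlib Require Import Lra Lia Classical ClassicalEpsilon FinFun.
Import ListNotations.
Open Scope R_scope.

(* Call a neighbour [v] of a type-1 site [u] a free direction of [u] if
   everything beyond the edge [u v] is vacant, and let [F] count the free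
   directions of all type-1 sites.  A birth from [u] in a free direction creates
   a type-1 site with [d - 1] free directions and costs [u] only one, so [F]
   grows by at least [d - 2 >= 1]; no other birth decreases [F].  A death or
   mutation at [u], of total rate [delta + mu], decreases [F] by at most the
   number [g <= d] of free directions of [u], into which [u] gives birth at
   total rate [g].  Comparing [(delta + mu) (2^g - 1)] with [g / 2] shows that
   [2^-F] is superharmonic for the jump chain once [(delta + mu) 2^d <= 1/2].
   As [F = 0] once type 1 has died out, the survival probability is at least
   [1 - 2^-F]; a lone type-1 site has [F >= 1], and from any finite
   configuration all other sites die first with positive probability. *)

Definition in_subtree (s z : vertex) : Prop := exists w, z = w ++ s.

Lemma in_subtree_refl s : in_subtree s s.
Proof. exists []. reflexivity. Qed.

Lemma in_subtree_length s z : in_subtree s z -> (length s <= length z)%nat.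
Proof. intros [w ->]. rewrite length_app. lia. Qed.

Lemma in_subtree_parent a s z : in_subtree (a :: s) z -> in_subtree s z.
Proof. intros [w ->]. exists (w ++ [a]). rewrite <- app_assoc. reflexivity. Qed.

Lemma in_subtree_child b s z : in_subtree s z -> in_subtree s (b :: z).
Proof. intros [w ->]. exists (b :: w). reflexivity. Qed.

Lemma in_subtree_cons_inv s b z : in_subtree s (b :: z) -> s = b :: z \/ in_subtree s z.
Proof.
  intros [[|c w] E]; [left; auto|right].
  injection E as -> ->. exists w. reflexivity.
Qed.

Lemma in_subtree_unique s1 s2 z :
  in_subtree s1 z -> in_subtree s2 z -> length s1 = length s2 -> s1 = s2.
Proof.
  intros [w1 ->] [w2 E] Hlen.
  destruct (app_eq_app _ _ _ _ E) as [l [[_ ->] | [_ ->]]];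
    rewrite length_app in Hlen; destruct l; simpl in *; auto; lia.
Qed.

(* Removing the edge [u v] splits the tree in two, and [beyond u v z] says that
   [z] lies in the component of [v]; the parent of [a :: p] is [p]. *)
Definition beyond (u v z : vertex) : Prop :=
  if vertex_eq_dec v (tl u) then ~ in_subtree u z else in_subtree v z.

Lemma neighbours_cases d u v :
  In v (neighbours d u) -> (exists a, u = a :: v) \/ (exists a, v = a :: u).
Proof.
  destruct u as [|b p]; simpl; intros H.
  - right. apply in_map_iff in H. destruct H as [a [<- _]]. eauto.
  - destruct H as [<-|H]; [left; eauto|right].
    apply in_map_iff in H. destruct H as [a [<- _]]. eauto.
Qed.

Lemma beyond_parent a p z : beyond (a :: p) p z <-> ~ in_subtree (a :: p) z.
Proof. unfold beyond. simpl. destruct (vertex_eq_dec p p); tauto. Qed.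

Lemma beyond_child a u z : beyond u (a :: u) z <-> in_subtree (a :: u) z.
Proof.
  unfold beyond. destruct (vertex_eq_dec (a :: u) (tl u)) as [E|]; [|tauto].
  apply (f_equal (@length nat)) in E. destruct u; simpl in E; lia.
Qed.

Lemma beyond_target d u v : In v (neighbours d u) -> beyond u v v.
Proof.
  intros H. destruct (neighbours_cases _ _ _ H) as [[a ->]|[a ->]].
  - apply beyond_parent. intros S. apply in_subtree_length in S. simpl in S. lia.
  - apply beyond_child, in_subtree_refl.
Qed.

Lemma not_beyond_source d u v : In v (neighbours d u) -> ~ beyond u v u.
Proof.
  intros H. destruct (neighbours_cases _ _ _ H) as [[a ->]|[a ->]].
  - rewrite beyond_parent. intros S; apply S, in_subtree_refl.
  - rewrite beyond_child. intros S. apply in_subtree_length in S. simpl in S. lia.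
Qed.

Lemma beyond_crossing d x y u v :
  In y (neighbours d x) -> In v (neighbours d u) ->
  ~ beyond u v x -> beyond u v y -> x = u /\ y = v.
Proof.
  intros Hxy Huv Hx Hy.
  destruct (neighbours_cases _ _ _ Huv) as [[a ->]|[a ->]].
  - rewrite beyond_parent in Hx, Hy. apply NNPP in Hx.
    destruct (neighbours_cases _ _ _ Hxy) as [[b ->]|[b ->]].
    + destruct (in_subtree_cons_inv _ _ _ Hx) as [E|S]; [injection E as -> ->; auto|].
      contradiction.
    + exfalso. apply Hy, in_subtree_child, Hx.
  - rewrite beyond_child in Hx, Hy.
    destruct (neighbours_cases _ _ _ Hxy) as [[b ->]|[b ->]].
    + exfalso. apply Hx, in_subtree_child, Hy.
    + destruct (in_subtree_cons_inv _ _ _ Hy) as [E|S]; [injection E as -> ->; auto|].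
      contradiction.
Qed.

Lemma beyond_step d x y w z :
  In y (neighbours d x) -> In w (neighbours d y) -> w <> x ->
  beyond y w z -> beyond x y z.
Proof.
  intros Hxy Hyw Hwx H.
  destruct (neighbours_cases _ _ _ Hxy) as [[b ->]|[b ->]].
  - rewrite beyond_parent.
    destruct (neighbours_cases _ _ _ Hyw) as [[c ->]|[c ->]].
    + rewrite beyond_parent in H. intros S. apply H, (in_subtree_parent _ _ _ S).
    + rewrite beyond_child in H. intros S. apply Hwx, (in_subtree_unique _ _ z); auto.
  - rewrite beyond_child.
    destruct (neighbours_cases _ _ _ Hyw) as [[c E]|[c ->]].
    + injection E as -> ->. contradiction.
    + rewrite beyond_child in H. exact (in_subtree_parent _ _ _ H).
Qed.

Lemma neighbour_is_vertex d u v : is_vertex d u -> In v (neighbours d u) -> is_vertex d v.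
Proof.
  destruct u as [|b p]; simpl; intros Hu H.
  - apply in_map_iff in H. destruct H as [a [<- Ha]]. apply in_seq in Ha. simpl. split; auto; lia.
  - destruct H as [<-|H]; [tauto|].
    apply in_map_iff in H. destruct H as [a [<- Ha]]. apply in_seq in Ha.
    simpl. split; [exact Hu|lia].
Qed.

Lemma length_neighbours d u : (1 <= d)%nat -> length (neighbours d u) = d.
Proof. intros Hd. destruct u; simpl; rewrite length_map, length_seq; lia. Qed.

Lemma NoDup_neighbours d u : NoDup (neighbours d u).
Proof.
  assert (Inj : forall w : vertex, Injective (fun a : nat => a :: w))
    by (intros w a b E; injection E; auto).
  destruct u as [|b p]; simpl.
  - exact (Injective_map_NoDup (Inj []) (seq_NoDup _ _)).
  - constructor; [|exact (Injective_map_NoDup (Inj _) (seq_NoDup _ _))].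
    intros H. apply in_map_iff in H. destruct H as [a [E _]].
    apply (f_equal (@length nat)) in E. simpl in E. lia.
Qed.

Lemma neighbours_nonempty d u : (1 <= d)%nat -> exists v, In v (neighbours d u).
Proof.
  intros Hd. destruct (neighbours d u) as [|v l] eqn:E; [|exists v; left; auto].
  apply (f_equal (@length vertex)) in E. rewrite length_neighbours in E; simpl in E; lia.
Qed.

Section Counting.

Context {A : Type}.
Implicit Types (p q : A -> bool) (f g : A -> nat) (l : list A).

Lemma filter_length_mono p q l :
  (forall v, In v l -> p v = true -> q v = true) ->
  (length (filter p l) <= length (filter q l))%nat.
Proof.
  induction l as [|a l IH]; simpl; intros H; [lia|].
  specialize (IH (fun v Hv => H v (or_intror Hv))).
  destruct (p a) eqn:E.
  - rewrite (H a (or_introl eq_refl) E). simpl. lia.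
  - destruct (q a); simpl; lia.
Qed.

Lemma filter_length_mono_but_one p q l y : NoDup l ->
  (forall v, In v l -> p v = true -> q v = true \/ v = y) ->
  (length (filter p l) <= length (filter q l) + 1)%nat.
Proof.
  induction l as [|a l IH]; simpl; intros ND H; [lia|].
  apply NoDup_cons_iff in ND as [Ha ND].
  specialize (IH ND (fun v Hv => H v (or_intror Hv))).
  destruct (p a) eqn:E; [|destruct (q a); simpl; lia].
  destruct (H a (or_introl eq_refl) E) as [ -> | -> ]; simpl; [lia|].
  enough (length (filter p l) <= length (filter q l))%nat by (destruct (q y); simpl; lia).
  apply filter_length_mono. intros v Hv Pv.
  destruct (H v (or_intror Hv) Pv) as [| ->]; [auto|contradiction].
Qed.

Lemma filter_length_all_but_one p l y : NoDup l ->
  (forall v, In v l -> v <> y -> p v = true) -> (length l <= length (filter p l) + 1)%nat.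
Proof.
  intros ND H. rewrite <- (filter_true l) at 1.
  apply (filter_length_mono_but_one _ _ _ y ND). intros v Hv _.
  destruct (classic (v = y)); auto.
Qed.

Lemma filter_filter_length p q l : (forall v, p v = true -> q v = true) ->
  length (filter p (filter q l)) = length (filter p l).
Proof.
  intros H. induction l as [|a l IH]; simpl; auto.
  destruct (q a) eqn:Eq; simpl.
  - destruct (p a); simpl; rewrite IH; auto.
  - destruct (p a) eqn:Ep; [rewrite (H a Ep) in Eq; discriminate|auto].
Qed.

Lemma list_sum_map_le f g l :
  (forall u, In u l -> (f u <= g u)%nat) -> (list_sum (map f l) <= list_sum (map g l))%nat.
Proof.
  induction l as [|a l IH]; simpl; intros H; [lia|].
  specialize (IH (fun u Hu => H u (or_intror Hu))). specialize (H a (or_introl eq_refl)). lia.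
Qed.

Lemma list_sum_map_add f g l :
  list_sum (map (fun u => f u + g u)%nat l) = (list_sum (map f l) + list_sum (map g l))%nat.
Proof. induction l; simpl; lia. Qed.

Lemma list_sum_map_zero f l : (forall u, In u l -> f u = 0%nat) -> list_sum (map f l) = 0%nat.
Proof. induction l; simpl; intros H; auto. rewrite H, IHl; auto. Qed.

Lemma in_le_list_sum_map f l x : In x l -> (f x <= list_sum (map f l))%nat.
Proof. induction l; simpl; [tauto|]. intros [<-|H]; [lia|]. specialize (IHl H). lia. Qed.

Variable eq_dec : forall x y : A, {x = y} + {x <> y}.

Definition indicator (x : A) (c : nat) (u : A) : nat := if eq_dec u x then c else 0.

Lemma list_sum_map_indicator_le x c l : NoDup l -> (list_sum (map (indicator x c) l) <= c)%nat.
Proof.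
  induction l as [|a l IH]; simpl; intros ND; [lia|].
  apply NoDup_cons_iff in ND as [Ha ND]. unfold indicator at 1.
  destruct (eq_dec a x) as [->|]; [|simpl; auto].
  rewrite list_sum_map_zero; [lia|].
  intros u Hu. unfold indicator. destruct (eq_dec u x) as [->|]; tauto.
Qed.

Lemma list_sum_map_indicator x c l :
  NoDup l -> In x l -> list_sum (map (indicator x c) l) = c.
Proof.
  induction l as [|a l IH]; simpl; intros ND Hx; [tauto|].
  apply NoDup_cons_iff in ND as [Ha ND]. unfold indicator at 1.
  destruct (eq_dec a x) as [->|].
  - rewrite list_sum_map_zero; [lia|].
    intros u Hu. unfold indicator. destruct (eq_dec u x) as [->|]; tauto.
  - destruct Hx as [->|Hx]; [contradiction|]. simpl. auto.
Qed.

Lemma list_sum_map_remove_le f a l :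
  (list_sum (map f (remove eq_dec a l)) <= list_sum (map f l))%nat.
Proof. induction l as [|b l IH]; simpl; [lia|]. destruct (eq_dec a b); simpl; lia. Qed.

Lemma list_sum_map_remove f a l : In a l ->
  (f a + list_sum (map f (remove eq_dec a l)) <= list_sum (map f l))%nat.
Proof.
  induction l as [|b l IH]; simpl; [tauto|]. intros Ha.
  destruct (eq_dec a b) as [->|Hab]; simpl.
  - pose proof (list_sum_map_remove_le f b l). lia.
  - destruct Ha as [->|Ha]; [congruence|]. specialize (IH Ha). lia.
Qed.

Lemma list_sum_map_incl f l1 l2 :
  NoDup l1 -> incl l1 l2 -> (list_sum (map f l1) <= list_sum (map f l2))%nat.
Proof.
  revert l2; induction l1 as [|a l1 IH]; simpl; intros l2 ND Hincl; [lia|].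
  apply NoDup_cons_iff in ND as [Ha ND].
  pose proof (list_sum_map_remove f a l2 (Hincl a (or_introl eq_refl))).
  enough (list_sum (map f l1) <= list_sum (map f (remove eq_dec a l2)))%nat by lia.
  apply IH; auto. intros x Hx. apply in_in_remove; [congruence|]. apply Hincl; right; auto.
Qed.

End Counting.

Definition sumR {A} (f : A -> R) (l : list A) : R := fold_right (fun a acc => f a + acc) 0 l.

Section RealSums.

Context {A : Type}.
Implicit Types (f g : A -> R) (l : list A).

Lemma sumR_app f l1 l2 : sumR f (l1 ++ l2) = sumR f l1 + sumR f l2.
Proof. induction l1; simpl; [lra|]. unfold sumR in *. rewrite IHl1. lra. Qed.

Lemma sumR_le f g l : (forall a, In a l -> f a <= g a) -> sumR f l <= sumR g l.
Proof.
  induction l as [|a l IH]; simpl; intros H; [lra|].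
  specialize (IH (fun b Hb => H b (or_intror Hb))). specialize (H a (or_introl eq_refl)).
  unfold sumR in *. lra.
Qed.

Lemma sumR_nonneg f l : (forall a, In a l -> 0 <= f a) -> 0 <= sumR f l.
Proof.
  induction l as [|a l IH]; simpl; intros H; [lra|].
  specialize (IH (fun b Hb => H b (or_intror Hb))). specialize (H a (or_introl eq_refl)).
  unfold sumR in *. lra.
Qed.

Lemma sumR_minus f g l : sumR (fun a => f a - g a) l = sumR f l - sumR g l.
Proof. induction l; simpl; [lra|]. unfold sumR in *. rewrite IHl. lra. Qed.

Lemma sumR_cons f a l : sumR f (a :: l) = f a + sumR f l.
Proof. reflexivity. Qed.

Lemma sumR_scal_l c f l : sumR (fun a => c * f a) l = c * sumR f l.
Proof. induction l; simpl; [lra|]. unfold sumR in *. rewrite IHl. lra. Qed.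

Lemma sumR_scal_r c f l : sumR (fun a => f a * c) l = sumR f l * c.
Proof. induction l; simpl; [lra|]. unfold sumR in *. rewrite IHl. lra. Qed.

Lemma in_le_sumR f l a : (forall b, In b l -> 0 <= f b) -> In a l -> f a <= sumR f l.
Proof.
  induction l as [|b l IH]; simpl; intros H Ha; [tauto|].
  pose proof (sumR_nonneg f l (fun c Hc => H c (or_intror Hc))).
  destruct Ha as [<-|Ha]; [unfold sumR in *; lra|].
  specialize (IH (fun c Hc => H c (or_intror Hc)) Ha). specialize (H b (or_introl eq_refl)).
  unfold sumR in *. lra.
Qed.

Lemma sumR_flat_map_le {B} f g (h : B -> list A) (l : list B) :
  (forall x, In x l -> sumR f (h x) <= sumR g (h x)) ->
  sumR f (flat_map h l) <= sumR g (flat_map h l).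
Proof.
  induction l as [|x l IH]; simpl; intros H; [lra|]. rewrite !sumR_app.
  specialize (IH (fun y Hy => H y (or_intror Hy))). specialize (H x (or_introl eq_refl)). lra.
Qed.

Lemma sumR_map_filter_le {B} (h : B -> A) (p : B -> bool) f g c (l : list B) :
  (forall y, In y l -> f (h y) + (if p y then c else 0) <= g (h y)) ->
  sumR f (map h l) + c * INR (length (filter p l)) <= sumR g (map h l).
Proof.
  induction l as [|y l IH]; simpl; intros H; [lra|].
  specialize (IH (fun z Hz => H z (or_intror Hz))). specialize (H y (or_introl eq_refl)).
  unfold sumR in *. destruct (p y); simpl length; try rewrite S_INR; lra.
Qed.

End RealSums.

Lemma upd_eq xi y s : upd xi y s y = s.
Proof. unfold upd. destruct (vertex_eq_dec y y); congruence. Qed.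

Lemma upd_neq xi y s v : v <> y -> upd xi y s v = xi v.
Proof. unfold upd. destruct (vertex_eq_dec v y); congruence. Qed.

Lemma has_one_iff xi L : has_one xi L = true <-> exists x, In x L /\ xi x = one.
Proof.
  unfold has_one. rewrite existsb_exists.
  split; intros [x [Hx O]]; exists x; split; auto; destruct (xi x); simpl in *; congruence.
Qed.

Section FreeDirections.

Variable d : nat.
Implicit Types (xi : config) (L : list vertex).

Definition free xi (u v : vertex) : Prop :=
  xi u = one /\ In v (neighbours d u) /\ (forall z, xi z <> vac -> ~ beyond u v z).

Definition freeb xi u v : bool :=
  if excluded_middle_informative (free xi u v) then true else false.

Lemma freeb_spec xi u v : freeb xi u v = true <-> free xi u v.
Proof. unfold freeb. destruct (excluded_middle_informative _); split; auto; discriminate. Qed.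

Lemma free_target_vacant xi x y : free xi x y -> xi y = vac.
Proof.
  intros [_ [N B]]. destruct (xi y) eqn:E; auto;
    exfalso; apply (B y); [congruence| |congruence|]; eapply beyond_target; eauto.
Qed.

Lemma free_upd_other xi x s u v : (s <> vac -> xi x <> vac) -> u <> x ->
  free xi u v -> free (upd xi x s) u v.
Proof.
  intros Hs Hu [O [N B]]. repeat split; auto; [rewrite upd_neq; auto|].
  intros z Hz. destruct (vertex_eq_dec z x) as [->|].
  - rewrite upd_eq in Hz. auto.
  - rewrite upd_neq in Hz; auto.
Qed.

Lemma free_upd_birth xi x y s u v :
  xi y = vac -> xi x <> vac -> In y (neighbours d x) ->
  free xi u v -> free (upd xi y s) u v \/ (u = x /\ v = y).
Proof.
  intros Hy Hx Nxy [O [N B]].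
  destruct (classic (beyond u v y)) as [I|I].
  - right. destruct (beyond_crossing d x y u v Nxy N (B x Hx) I). auto.
  - left. assert (u <> y) by congruence. repeat split; auto; [rewrite upd_neq; auto|].
    intros z Hz. destruct (vertex_eq_dec z y) as [->|]; auto. rewrite upd_neq in Hz; auto.
Qed.

Lemma free_newborn xi x y w : free xi x y -> In w (neighbours d y) -> w <> x ->
  free (upd xi y one) y w.
Proof.
  intros [O [N B]] Nw Hw. repeat split; auto; [apply upd_eq|].
  intros z Hz. destruct (vertex_eq_dec z y) as [->|]; [eapply not_beyond_source; eauto|].
  rewrite upd_neq in Hz; auto. intros I. apply (B z Hz). eapply beyond_step; eauto.
Qed.

Definition free_degree xi u : nat := length (filter (freeb xi u) (neighbours d u)).

Lemma free_degree_not_one xi u : xi u <> one -> free_degree xi u = 0%nat.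
Proof.
  intros H. unfold free_degree.
  enough (length (filter (freeb xi u) (neighbours d u)) <=
          length (filter (fun _ => false) (neighbours d u)))%nat
    by (rewrite filter_false in *; simpl in *; lia).
  apply filter_length_mono. intros v _ F. apply freeb_spec in F. destruct F. contradiction.
Qed.

Lemma free_degree_le xi u : (1 <= d)%nat -> (free_degree xi u <= d)%nat.
Proof. intros Hd. rewrite <- (length_neighbours d u Hd). apply filter_length_le. Qed.

Lemma free_degree_upd_other xi x s u : (s <> vac -> xi x <> vac) -> u <> x ->
  (free_degree xi u <= free_degree (upd xi x s) u)%nat.
Proof.
  intros Hs Hu. apply filter_length_mono. intros v _ F.
  apply freeb_spec, free_upd_other, freeb_spec; auto.
Qed.

Lemma free_degree_birth xi x y s u :
  xi y = vac -> xi x <> vac -> In y (neighbours d x) -> u <> x \/ ~ free xi x y ->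
  (free_degree xi u <= free_degree (upd xi y s) u)%nat.
Proof.
  intros Hy Hx Nxy Hu. apply filter_length_mono. intros v _ F. apply freeb_spec in F.
  apply freeb_spec. destruct (free_upd_birth xi x y s u v Hy Hx Nxy F) as [|[-> ->]]; tauto.
Qed.

Lemma free_degree_birth_source xi x y s :
  xi y = vac -> xi x <> vac -> In y (neighbours d x) ->
  (free_degree xi x <= free_degree (upd xi y s) x + 1)%nat.
Proof.
  intros Hy Hx Nxy. apply (filter_length_mono_but_one _ _ _ y (NoDup_neighbours d x)).
  intros v _ F. apply freeb_spec in F.
  destruct (free_upd_birth xi x y s x v Hy Hx Nxy F) as [F'|[_ ->]]; [left|right]; auto.
  apply freeb_spec; auto.
Qed.

Lemma free_degree_newborn xi x y : (1 <= d)%nat -> free xi x y ->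
  (d <= free_degree (upd xi y one) y + 1)%nat.
Proof.
  intros Hd F. rewrite <- (length_neighbours d y Hd).
  apply (filter_length_all_but_one _ _ x (NoDup_neighbours d y)).
  intros w Hw Hwx. apply freeb_spec. eapply free_newborn; eauto.
Qed.

Definition free_total xi L : nat :=
  list_sum (map (free_degree xi) (nodup vertex_eq_dec L)).

Lemma free_total_upd xi L x s : (s <> vac -> xi x <> vac) ->
  (free_total xi L <= free_total (upd xi x s) L + free_degree xi x)%nat.
Proof.
  intros Hs. unfold free_total.
  pose proof (list_sum_map_indicator_le vertex_eq_dec x (free_degree xi x) _
                (NoDup_nodup vertex_eq_dec L)).
  enough (list_sum (map (free_degree xi) (nodup vertex_eq_dec L)) <=
          list_sum (map (fun u => free_degree (upd xi x s) u
                          + indicator vertex_eq_dec x (free_degree xi x) u)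
                        (nodup vertex_eq_dec L)))%nat
    by (rewrite list_sum_map_add in *; lia).
  apply list_sum_map_le. intros u _. unfold indicator.
  destruct (vertex_eq_dec u x) as [->|Hux]; [lia|].
  pose proof (free_degree_upd_other xi x s u Hs Hux). lia.
Qed.

Lemma free_total_cons xi L y :
  (free_total xi L <= list_sum (map (free_degree xi) (nodup vertex_eq_dec (y :: L))))%nat.
Proof.
  apply (list_sum_map_incl vertex_eq_dec); [apply NoDup_nodup|].
  intros z Hz. apply nodup_In in Hz. apply nodup_In. right; auto.
Qed.

Lemma free_total_birth xi L x y s :
  xi y = vac -> xi x <> vac -> In y (neighbours d x) -> ~ free xi x y ->
  (free_total xi L <= free_total (upd xi y s) (y :: L))%nat.
Proof.
  intros Hy Hx Nxy NF. eapply Nat.le_trans; [apply (free_total_cons xi L y)|].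
  apply list_sum_map_le. intros u _. apply (free_degree_birth xi x); auto.
Qed.

Lemma free_total_free_birth xi L x y : (1 <= d)%nat ->
  xi x <> vac -> In y (neighbours d x) -> free xi x y ->
  (free_total xi L + d <= free_total (upd xi y one) (y :: L) + 2)%nat.
Proof.
  intros Hd Hx Nxy F.
  pose proof (free_target_vacant _ _ _ F) as Hy.
  set (l := nodup vertex_eq_dec (y :: L)).
  assert (Hl : NoDup l) by apply NoDup_nodup.
  assert (Hyl : In y l) by (apply nodup_In; left; auto).
  (* [y] gets all its directions but the one back to [x], and [x] loses at most
     the direction towards [y]. *)
  assert (Pointwise : forall u, (free_degree xi u + indicator vertex_eq_dec y (d - 1) u <=
                                 free_degree (upd xi y one) u + indicator vertex_eq_dec x 1 u)%nat).
  { intros u. unfold indicator.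
    destruct (vertex_eq_dec u y) as [->|Huy].
    - destruct (vertex_eq_dec y x); [congruence|].
      rewrite free_degree_not_one by congruence.
      pose proof (free_degree_newborn xi x y Hd F). lia.
    - destruct (vertex_eq_dec u x) as [->|Hux].
      + pose proof (free_degree_birth_source xi x y one Hy Hx Nxy). lia.
      + pose proof (free_degree_birth xi x y one u Hy Hx Nxy (or_introl Hux)). lia. }
  pose proof (list_sum_map_le _ _ l (fun u _ => Pointwise u)) as Sum.
  rewrite !list_sum_map_add, list_sum_map_indicator in Sum by auto.
  pose proof (list_sum_map_indicator_le vertex_eq_dec x 1 l Hl).
  pose proof (free_total_cons xi L y) as Cons. fold l in Cons. unfold free_total in *. fold l. lia.
Qed.

Lemma free_total_no_one xi L : has_one xi L = false -> free_total xi L = 0%nat.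
Proof.
  intros H. apply list_sum_map_zero. intros u Hu. apply free_degree_not_one. intros O.
  apply nodup_In in Hu. rewrite <- Bool.not_true_iff_false, has_one_iff in H. eauto.
Qed.

Lemma free_total_isolated xi L x0 : (1 <= d)%nat -> In x0 L -> xi x0 = one ->
  (forall z, xi z <> vac -> z = x0) -> (1 <= free_total xi L)%nat.
Proof.
  intros Hd Hx0 O Iso. destruct (neighbours_nonempty d x0 Hd) as [v Hv].
  assert (F : free xi x0 v).
  { repeat split; auto. intros z Hz. rewrite (Iso z Hz). eapply not_beyond_source; eauto. }
  assert (Fv : In v (filter (freeb xi x0) (neighbours d x0)))
    by (apply filter_In; rewrite freeb_spec; auto).
  assert (1 <= free_degree xi x0)%nat
    by (unfold free_degree; destruct (filter _ _); [destruct Fv|simpl; lia]).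
  pose proof (in_le_list_sum_map (free_degree xi) _ x0 (proj2 (nodup_In vertex_eq_dec _ _) Hx0)).
  unfold free_total. lia.
Qed.

End FreeDirections.

Section Process.

Variables (d : nat) (delta mu : R).
Implicit Types (xi : config) (L : list vertex).

Lemma in_moves xi L m : In m (moves d delta mu xi L) ->
  exists x, In x L /\ xi x <> vac /\
    (m = (delta, (upd xi x vac, L)) \/
     (xi x = one /\ m = (mu, (upd xi x two, L))) \/
     exists y, In y (neighbours d x) /\ xi y = vac /\ m = (1, (upd xi y (xi x), y :: L))).
Proof.
  unfold moves. intros Hm. apply in_flat_map in Hm. destruct Hm as [x [Hx Hm]].
  apply nodup_In in Hx. exists x. split; [exact Hx|].
  assert (Births : forall s, In m (births d xi L x s) -> s = xi x ->
            exists y, In y (neighbours d x) /\ xi y = vac /\ m = (1, (upd xi y (xi x), y :: L))).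
  { unfold births. intros s Hb ->. apply in_map_iff in Hb. destruct Hb as [y [<- Hy]].
    apply filter_In in Hy. destruct Hy as [Ny Vy]. exists y. repeat split; auto.
    destruct (xi y); auto; discriminate. }
  destruct (xi x) eqn:E; simpl in Hm; [tauto| |]; (split; [discriminate|]).
  - destruct Hm as [<-|[<-|Hm]]; auto. right; right. apply (Births one); auto.
  - destruct Hm as [<-|Hm]; auto. right; right. apply (Births two); auto.
Qed.

Hypotheses (Hdelta : 0 <= delta) (Hmu : 0 <= mu).

Lemma moves_rate_nonneg xi L m : In m (moves d delta mu xi L) -> 0 <= fst m.
Proof.
  intros Hm. destruct (in_moves _ _ _ Hm) as [x [_ [_ [->|[[_ ->]|[y [_ [_ ->]]]]]]]];
    simpl; lra.
Qed.

Lemma covers_moves xi L m : covers d xi L -> In m (moves d delta mu xi L) ->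
  covers d (fst (snd m)) (snd (snd m)).
Proof.
  intros C Hm. destruct (in_moves _ _ _ Hm) as [x [Hx [Ox Cases]]].
  assert (Upd : forall s, (s <> vac -> is_vertex d x) -> covers d (upd xi x s) L).
  { intros s Hs v Hv. destruct (vertex_eq_dec v x) as [->|].
    - rewrite upd_eq in Hv. auto.
    - rewrite upd_neq in Hv; auto. }
  destruct Cases as [->|[[_ ->]|[y [Ny [_ ->]]]]]; simpl.
  - apply Upd. tauto.
  - apply Upd. intros _. apply C, Ox.
  - intros v Hv. destruct (vertex_eq_dec v y) as [->|].
    + split; [|left; auto]. eapply neighbour_is_vertex; [apply C, Ox|exact Ny].
    + rewrite upd_neq in Hv; auto. destruct (C v Hv). split; [|right]; auto.
Qed.

Lemma total_rate_sumR xi L : total_rate d delta mu xi L = sumR fst (moves d delta mu xi L).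
Proof. reflexivity. Qed.

Lemma death_in_moves xi L x : In x L -> xi x <> vac ->
  In (delta, (upd xi x vac, L)) (moves d delta mu xi L).
Proof.
  intros Hx Ox. unfold moves. apply in_flat_map. exists x. split; [apply nodup_In; auto|].
  destruct (xi x); [congruence|left; auto|left; auto].
Qed.

Lemma total_rate_ge_delta xi L x : In x L -> xi x <> vac ->
  delta <= total_rate d delta mu xi L.
Proof.
  intros Hx Ox. apply (in_le_sumR fst _ (delta, (upd xi x vac, L))).
  - apply moves_rate_nonneg.
  - apply death_in_moves; auto.
Qed.

End Process.

Lemma half_pow_le a b : (a <= b)%nat -> (/ 2) ^ b <= (/ 2) ^ a.
Proof.
  intros H. rewrite !pow_inv. apply Rinv_le_contravar; [apply pow_lt; lra|].
  apply Rle_pow; [lra|exact H].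
Qed.

Lemma half_pow_shift a b k : (a <= b + k)%nat -> (/ 2) ^ b <= (/ 2) ^ a * 2 ^ k.
Proof.
  intros H. replace ((/ 2) ^ b) with ((/ 2) ^ (b + k) * 2 ^ k).
  - apply Rmult_le_compat_r; [apply pow_le; lra|]. apply half_pow_le, H.
  - rewrite pow_add, Rmult_assoc, <- Rpow_mult_distr.
    replace (/ 2 * 2) with 1 by lra. rewrite pow1. lra.
Qed.

Section Weight.

Variable d : nat.
Implicit Types (xi : config) (L : list vertex).

Definition weight xi L : R := (/ 2) ^ free_total d xi L.

Definition target_weight (m : R * (config * list vertex)) : R :=
  weight (fst (snd m)) (snd (snd m)).

Lemma weight_nonneg xi L : 0 <= weight xi L.
Proof. apply pow_le. lra. Qed.

Lemma weight_upd xi L x s : (s <> vac -> xi x <> vac) ->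
  weight (upd xi x s) L <= weight xi L * 2 ^ free_degree d xi x.
Proof. intros Hs. apply half_pow_shift, free_total_upd, Hs. Qed.

Lemma weight_birth xi L x y s :
  xi y = vac -> xi x <> vac -> In y (neighbours d x) -> ~ free d xi x y ->
  weight (upd xi y s) (y :: L) <= weight xi L.
Proof. intros Hy Hx Nxy NF. apply half_pow_le. eapply free_total_birth; eauto. Qed.

Lemma weight_free_birth xi L x y : (3 <= d)%nat ->
  xi x <> vac -> In y (neighbours d x) -> free d xi x y ->
  weight (upd xi y one) (y :: L) <= weight xi L / 2.
Proof.
  intros Hd Hx Nxy F. pose proof (free_total_free_birth d xi L x y ltac:(lia) Hx Nxy F).
  unfold weight. replace ((/ 2) ^ free_total d xi L / 2) with ((/ 2) ^ S (free_total d xi L))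
    by (simpl; lra).
  apply half_pow_le. lia.
Qed.

Lemma weight_no_one xi L : has_one xi L = false -> weight xi L = 1.
Proof. intros H. unfold weight. rewrite free_total_no_one; auto. Qed.

Lemma weight_isolated xi L x0 : (1 <= d)%nat -> In x0 L -> xi x0 = one ->
  (forall z, xi z <> vac -> z = x0) -> weight xi L <= / 2.
Proof.
  intros Hd Hx0 O Iso. replace (/ 2) with ((/ 2) ^ 1) by lra.
  apply half_pow_le. eapply free_total_isolated; eauto.
Qed.

Lemma births_one_weight xi L x : (3 <= d)%nat -> xi x = one ->
  sumR (fun m => fst m * target_weight m) (births d xi L x one)
    + weight xi L / 2 * INR (free_degree d xi x)
  <= sumR (fun m => fst m * weight xi L) (births d xi L x one).
Proof.
  intros Hd Ox. unfold births, free_degree.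
  rewrite <- (filter_filter_length _ (fun y => is_vac (xi y)))
    by (intros v F; apply freeb_spec, free_target_vacant in F; rewrite F; auto).
  apply sumR_map_filter_le. intros y Hy. apply filter_In in Hy. destruct Hy as [Nxy Vy].
  assert (Hy : xi y = vac) by (destruct (xi y); auto; discriminate).
  unfold target_weight. simpl. destruct (freeb d xi x y) eqn:F.
  - apply freeb_spec in F.
    pose proof (weight_free_birth xi L x y Hd ltac:(congruence) Nxy F). lra.
  - assert (NF : ~ free d xi x y) by (rewrite <- freeb_spec, F; discriminate).
    pose proof (weight_birth xi L x y one Hy ltac:(congruence) Nxy NF). lra.
Qed.

Lemma births_two_weight xi L x : xi x = two ->
  sumR (fun m => fst m * target_weight m) (births d xi L x two)
  <= sumR (fun m => fst m * weight xi L) (births d xi L x two).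
Proof.
  intros Tx. unfold births. apply sumR_le. intros m Hm. apply in_map_iff in Hm.
  destruct Hm as [y [<- Hy]]. apply filter_In in Hy. destruct Hy as [Nxy Vy].
  assert (Hy : xi y = vac) by (destruct (xi y); auto; discriminate).
  assert (NF : ~ free d xi x y) by (intros [O _]; congruence).
  unfold target_weight. simpl.
  pose proof (weight_birth xi L x y two Hy ltac:(congruence) Nxy NF). lra.
Qed.

End Weight.

Section Survival.

Variables (d : nat) (delta mu : R).
Hypotheses (Hd : (3 <= d)%nat) (Hdelta : 0 < delta) (Hmu : 0 <= mu)
  (Hsmall : (delta + mu) * 2 ^ d <= / 2).
Implicit Types (xi : config) (L : list vertex).

Lemma rate_budget g : (g <= d)%nat -> (delta + mu) * 2 ^ g <= delta + mu + INR g / 2.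
Proof.
  intros Hg. destruct g as [|g]; [simpl; lra|].
  assert (2 ^ S g <= 2 ^ d) by (apply Rle_pow; [lra|exact Hg]).
  assert (1 <= INR (S g)) by (rewrite S_INR; pose proof (pos_INR g); lra).
  nra.
Qed.

Lemma weight_superharmonic xi L :
  sumR (fun m => fst m * target_weight d m) (moves d delta mu xi L)
  <= total_rate d delta mu xi L * weight d xi L.
Proof.
  rewrite total_rate_sumR, <- sumR_scal_r. unfold moves. apply sumR_flat_map_le. intros x _.
  pose proof (weight_nonneg d xi L) as Hw.
  destruct (xi x) eqn:E; rewrite ?sumR_cons.
  - simpl. lra.
  - unfold target_weight at 1 2; cbn [fst snd].
    pose proof (births_one_weight d xi L x Hd E) as Births.
    pose proof (weight_upd d xi L x vac ltac:(congruence)) as Death.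
    pose proof (weight_upd d xi L x two ltac:(congruence)) as Mutation.
    pose proof (rate_budget _ (free_degree_le d xi x ltac:(lia))) as Budget.
    set (w := weight d xi L) in *. set (g := free_degree d xi x) in *.
    pose proof (Rmult_le_compat_l delta _ _ ltac:(lra) Death).
    pose proof (Rmult_le_compat_l mu _ _ Hmu Mutation).
    pose proof (Rmult_le_compat_l w _ _ Hw Budget).
    lra.
  - unfold target_weight at 1; cbn [fst snd].
    pose proof (births_two_weight d xi L x E) as Births.
    pose proof (weight_upd d xi L x vac ltac:(congruence)) as Death.
    rewrite free_degree_not_one, pow_O, Rmult_1_r in Death by congruence.
    pose proof (Rmult_le_compat_l delta _ _ ltac:(lra) Death).
    lra.
Qed.

Lemma surv_n_0 xi L : surv_n d delta mu 0 xi L = if has_one xi L then 1 else 0.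
Proof. reflexivity. Qed.

Lemma surv_n_S n xi L : surv_n d delta mu (S n) xi L =
  if has_one xi L
  then sumR (fun m => fst m / total_rate d delta mu xi L
                        * surv_n d delta mu n (fst (snd m)) (snd (snd m)))
            (moves d delta mu xi L)
  else 0.
Proof. reflexivity. Qed.

Lemma total_rate_pos xi L : has_one xi L = true -> 0 < total_rate d delta mu xi L.
Proof.
  intros H. apply has_one_iff in H as [x [Hx O]].
  pose proof (total_rate_ge_delta d delta mu (Rlt_le _ _ Hdelta) Hmu xi L x Hx
                ltac:(congruence)).
  lra.
Qed.

Lemma surv_n_nonneg n xi L : covers d xi L -> 0 <= surv_n d delta mu n xi L.
Proof.
  revert xi L. induction n as [|n IH]; intros xi L C.
  - rewrite surv_n_0. destruct (has_one xi L); lra.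
  - rewrite surv_n_S. destruct (has_one xi L) eqn:H; [|lra].
    pose proof (total_rate_pos xi L H).
    apply sumR_nonneg. intros m Hm. unfold Rdiv. apply Rmult_le_pos.
    + apply Rmult_le_pos; [exact (moves_rate_nonneg d delta mu (Rlt_le _ _ Hdelta) Hmu xi L m Hm)|].
      apply Rlt_le, Rinv_0_lt_compat. lra.
    + apply IH. eapply covers_moves; eauto.
Qed.

Lemma surv_n_ge_weight n xi L : covers d xi L -> 1 - weight d xi L <= surv_n d delta mu n xi L.
Proof.
  revert xi L. induction n as [|n IH]; intros xi L C.
  - rewrite surv_n_0. pose proof (weight_nonneg d xi L) as Hw.
    destruct (has_one xi L) eqn:H; [|rewrite weight_no_one]; auto; lra.
  - rewrite surv_n_S. destruct (has_one xi L) eqn:H; [|rewrite weight_no_one; auto; lra].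
    set (T := total_rate d delta mu xi L). assert (HT : 0 < T) by apply total_rate_pos, H.
    apply Rle_trans with (sumR (fun m => / T * (fst m - fst m * target_weight d m))
                               (moves d delta mu xi L)).
    + rewrite sumR_scal_l, sumR_minus, <- total_rate_sumR. fold T.
      pose proof (weight_superharmonic xi L) as Super. fold T in Super.
      apply (Rmult_le_compat_l (/ T)) in Super; [|apply Rlt_le, Rinv_0_lt_compat; lra].
      rewrite <- Rmult_assoc, Rinv_l, Rmult_1_l in Super by lra.
      rewrite Rmult_minus_distr_l, Rinv_l by lra. lra.
    + apply sumR_le. intros m Hm.
      pose proof (IH _ _ (covers_moves d delta mu xi L m C Hm)).
      pose proof (moves_rate_nonneg d delta mu (Rlt_le _ _ Hdelta) Hmu xi L m Hm).
      unfold target_weight. unfold Rdiv.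
      replace (/ T * (fst m - fst m * weight d (fst (snd m)) (snd (snd m))))
        with (fst m * / T * (1 - weight d (fst (snd m)) (snd (snd m)))) by ring.
      apply Rmult_le_compat_l; auto.
      apply Rmult_le_pos; auto. apply Rlt_le, Rinv_0_lt_compat. lra.
Qed.

Lemma surv_n_S_ge_death n xi L x : covers d xi L -> has_one xi L = true ->
  In x L -> xi x <> vac ->
  delta / total_rate d delta mu xi L * surv_n d delta mu n (upd xi x vac) L
  <= surv_n d delta mu (S n) xi L.
Proof.
  intros C H Hx Ox. rewrite surv_n_S, H.
  pose proof (total_rate_pos xi L H).
  apply (in_le_sumR (fun m => fst m / total_rate d delta mu xi L
                               * surv_n d delta mu n (fst (snd m)) (snd (snd m)))
                    _ (delta, (upd xi x vac, L))); [|apply death_in_moves; auto].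
  intros m Hm. apply Rmult_le_pos; [|apply surv_n_nonneg; eapply covers_moves; eauto].
  apply Rmult_le_pos; [exact (moves_rate_nonneg d delta mu (Rlt_le _ _ Hdelta) Hmu xi L m Hm)|].
  apply Rlt_le, Rinv_0_lt_compat. lra.
Qed.

Definition surv_bounded_below xi L : Prop :=
  exists c, 0 < c /\ forall n, c <= surv_n d delta mu n xi L.

Lemma surv_bounded_below_death xi L x : covers d xi L -> has_one xi L = true ->
  In x L -> xi x <> vac -> surv_bounded_below (upd xi x vac) L -> surv_bounded_below xi L.
Proof.
  intros C H Hx Ox [c [Hc Bound]].
  set (T := total_rate d delta mu xi L).
  assert (HT : delta <= T)
    by exact (total_rate_ge_delta d delta mu (Rlt_le _ _ Hdelta) Hmu xi L x Hx Ox).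
  assert (Hratio : 0 < delta / T <= 1).
  { split; [apply Rdiv_lt_0_compat; lra|].
    apply (Rmult_le_reg_r T); [lra|]. unfold Rdiv. rewrite Rmult_assoc, Rinv_l; lra. }
  exists (delta / T * c). split; [apply Rmult_lt_0_compat; lra|]. intros [|n].
  - assert (c <= 1) by (pose proof (Bound 0%nat) as B0; rewrite surv_n_0 in B0;
                        destruct (has_one (upd xi x vac) L); lra).
    rewrite surv_n_0, H. rewrite <- (Rmult_1_r 1). apply Rmult_le_compat; lra.
  - eapply Rle_trans; [|apply (surv_n_S_ge_death n xi L x C H Hx Ox)].
    apply Rmult_le_compat_l; [apply Rlt_le, Hratio|apply Bound].
Qed.

Lemma surv_bounded_below_isolated xi L x0 : covers d xi L -> xi x0 = one ->
  (forall z, xi z <> vac -> z = x0) -> surv_bounded_below xi L.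
Proof.
  intros C O Iso. assert (Hx0 : In x0 L) by (apply C; congruence).
  exists (/ 2). split; [lra|]. intros n.
  pose proof (weight_isolated d xi L x0 ltac:(lia) Hx0 O Iso).
  pose proof (surv_n_ge_weight n xi L C). lra.
Qed.

Lemma surv_bounded_below_others K xi L x0 : covers d xi L -> xi x0 = one ->
  (forall z, xi z <> vac -> z <> x0 -> In z K) -> surv_bounded_below xi L.
Proof.
  revert xi. induction K as [|x K IH]; intros xi C O HK.
  - apply (surv_bounded_below_isolated xi L x0 C O).
    intros z Hz. apply NNPP. intros Hne. exact (HK z Hz Hne).
  - destruct (classic (xi x <> vac /\ x <> x0)) as [[Ox Hx0]|Hx].
    + assert (Hx : In x L) by (apply C, Ox).
      assert (H1 : has_one xi L = true)
        by (apply has_one_iff; exists x0; split; [apply C|]; congruence).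
      apply (surv_bounded_below_death xi L x C H1 Hx Ox), IH.
      * exact (covers_moves d delta mu xi L _ C (death_in_moves d delta mu xi L x Hx Ox)).
      * rewrite upd_neq; auto.
      * intros z Hz Hz0. destruct (vertex_eq_dec z x) as [->|Hzx]; [rewrite upd_eq in Hz; tauto|].
        rewrite upd_neq in Hz by auto. destruct (HK z Hz Hz0) as [->|]; tauto.
    + apply IH; auto. intros z Hz Hz0. destruct (HK z Hz Hz0) as [->|]; tauto.
Qed.

Lemma surv_bounded_below_of_one xi L x0 : covers d xi L -> xi x0 = one ->
  surv_bounded_below xi L.
Proof.
  intros C O. apply (surv_bounded_below_others L xi L x0 C O).
  intros z Hz _. apply C, Hz.
Qed.

End Survival.

Theorem proposition3 :
  forall d : nat, (3 <= d)%nat ->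
  exists eps : R, 0 < eps /\
    forall delta mu : R, 0 < delta -> 0 < mu -> delta + mu < eps ->
    forall (xi0 : config) (L0 : list vertex),
      covers d xi0 L0 ->
      (exists x, xi0 x = one) ->
      exists c : R, 0 < c /\ forall n : nat, c <= surv_n d delta mu n xi0 L0.
Proof.
  intros d Hd. assert (H2d : 0 < 2 ^ d) by (apply pow_lt; lra).
  exists (/ (2 * 2 ^ d)). split; [apply Rinv_0_lt_compat; lra|].
  intros delta mu Hdelta Hmu Heps xi0 L0 C [x0 O].
  assert (Hsmall : (delta + mu) * 2 ^ d <= / 2).
  { apply (Rmult_lt_compat_r (2 ^ d)) in Heps; [|exact H2d].
    replace (/ (2 * 2 ^ d) * 2 ^ d) with (/ 2) in Heps by (field; lra). lra. }
  exact (surv_bounded_below_of_one d delta mu Hd Hdelta (Rlt_le _ _ Hmu) Hsmall xi0 L0 x0 C O).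
Qed.
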